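(* Let $M_n$ be the array indexed by $\{0,1,\dots,n\}^3$ with $(M_n)_{i,j,k}=\min\big(k\min(i,j),\ ij-(n-k)\max(0,i+j-n)\big)$. Then $M_n$ is a corner-sum hypermatrix of order $n$ and $M_n\ge C$ entrywise for every corner-sum hypermatrix $C$ of order $n$; i.e. $M_n$ is the unique minimum element of $(\mathcal C_n,\preceq)$.
   Context: Let $[0,n]=\{0,1,\dots,n\}$. A corner-sum hypermatrix of order $n$ is an integer array $C=(C_{i,j,k})_{i,j,k\in[0,n]}$ such that for all $i,j\in[0,n]$: $C_{i,j,0}=C_{i,0,j}=C_{0,i,j}=0$, $C_{i,j,n}=C_{i,n,j}=C_{n,i,j}=ij$, and for all $k\in\{1,\dots,n\}$ each of $C_{i,j,k}-C_{i,j,k-1}$, $C_{i,k,j}-C_{i,k-1,j}$, $C_{k,i,j}-C_{k-1,i,j}$ is an integer in $\{\max(0,i+j-n),\dots,\min(i,j)\}$. $\mathcal C_n$ is the set of these, ordered by $C\preceq D$ iff $C\ge D$ entrywise. *)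

From mathcomp Require Import all_boot all_order all_algebra.
Set Implicit Arguments. Unset Strict Implicit. Unset Printing Implicit Defensive.
Import Order.TTheory GRing.Theory Num.Theory.
Local Open Scope ring_scope.

(* A hypermatrix indexed by [0,n]^3 is represented as a function
   nat -> nat -> nat -> int; only the values at indices <= n matter. *)
Definition hypermatrix := nat -> nat -> nat -> int.

Definition in_step_range (n i j : nat) (d : int) : Prop :=
  ((i + j - n)%N)%:Z <= d /\ d <= (minn i j)%:Z.
(* note: (i + j - n)%N is truncated subtraction, i.e. max(0, i+j-n) *)

Definition corner_sum (n : nat) (C : hypermatrix) : Prop :=
  (forall i j : nat, (i <= n)%N -> (j <= n)%N ->
     (C i j 0%N = 0 /\ C i 0%N j = 0 /\ C 0%N i j = 0) /\
     (C i j n = (i * j)%N%:Z /\ C i n j = (i * j)%N%:Z /\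
      C n i j = (i * j)%N%:Z)) /\
  (forall i j k : nat, (i <= n)%N -> (j <= n)%N -> (1 <= k <= n)%N ->
     [/\ in_step_range n i j (C i j k - C i j k.-1),
         in_step_range n i j (C i k j - C i k.-1 j)
       & in_step_range n i j (C k i j - C k.-1 i j)]).

Definition cs_le (n : nat) (C D : hypermatrix) : Prop :=
  forall i j k : nat, (i <= n)%N -> (j <= n)%N -> (k <= n)%N -> D i j k <= C i j k.

Definition Mn (n : nat) : hypermatrix := fun i j k =>
  Num.min ((k * minn i j)%N%:Z)
          ((i * j)%N%:Z - ((n - k) * (i + j - n))%N%:Z).

From mathcomp Require Import all_boot all_order all_algebra zify.
Set Implicit Arguments. Unset Strict Implicit. Unset Printing Implicit Defensive.
Import Order.TTheory GRing.Theory Num.Theory.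
Local Open Scope ring_scope.

(* Along each line of a corner-sum hypermatrix the entries go from 0 to ij in
   n steps, each in [max(0,i+j-n), min(i,j)]; climbing from 0 with steps at
   most min(i,j) and descending from ij with steps at least max(0,i+j-n) give
   the two bounds whose minimum is M_n.  Conversely, M_n is symmetric in its
   three indices on [0,n]^3 (its second argument of min is the symmetric
   polynomial ij+jk+ki+n^2-n(i+j+k) when i+j > n), so checking its steps
   along the last index suffices to see that it is a corner-sum hypermatrix. *)

Section StepBounds.

Variables (f : nat -> int) (n : nat).

Lemma le_steps_up (b : int) : (forall k, (k < n)%N -> f k.+1 - f k <= b) ->
  forall k, (k <= n)%N -> f k <= f 0%N + b *+ k.
Proof.
move=> hstep; elim=> [|k IH] hk; first by rewrite addr0.
have := hstep k hk; have := IH (ltnW hk); rewrite mulrSr; lia.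
Qed.

Lemma le_steps_down (a : int) : (forall k, (k < n)%N -> a <= f k.+1 - f k) ->
  forall k, (k <= n)%N -> f k <= f n - a *+ (n - k).
Proof.
move=> hstep k hk; rewrite -[k in f k](subKn hk).
elim: (n - k)%N (leq_subr k n) => [|m IH] hm; first by rewrite subn0 mulr0n subr0.
have hm' : (n - m.+1 < n)%N by lia.
have := hstep _ hm'; have := IH (ltnW hm).
have -> : ((n - m.+1).+1 = n - m)%N by lia.
rewrite mulrSr; lia.
Qed.

End StepBounds.

Lemma corner_sum_le_Mn (n : nat) (C : hypermatrix) : corner_sum n C ->
  forall i j k : nat, (i <= n)%N -> (j <= n)%N -> (k <= n)%N -> C i j k <= Mn n i j k.
Proof.
move=> [hbd hstep] i j k hi hj hk.
have [[C0 _] [Cn _]] := hbd i j hi hj.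
have step (l : nat) : (l < n)%N -> in_step_range n i j (C i j l.+1 - C i j l).
  by move=> hl; have [] := hstep i j l.+1 hi hj hl.
rewrite /Mn le_min; apply/andP; split.
- have := le_steps_up (fun l hl => (step l hl).2) hk.
  by rewrite C0 add0r -mulr_natr natz -PoszM mulnC.
- have := le_steps_down (fun l hl => (step l hl).1) hk.
  by rewrite Cn -mulr_natr natz -PoszM [(_ * (n - k))%N]mulnC.
Qed.

Lemma Mn_minE (n i j k : nat) : (i <= n)%N -> (j <= n)%N -> (k <= n)%N ->
  Mn n i j k = Num.min (Num.min (k * i)%N%:Z (k * j)%N%:Z)
    (Num.min (i * j)%N%:Z ((i * j + j * k + k * i + n * n)%N%:Z - (n * (i + j + k))%N%:Z)).
Proof.
move=> hi hj hk; rewrite /Mn; congr Num.min.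
  by case: (leqP i j) => h; [rewrite min_l | rewrite min_r]; nia.
by case: (leqP (i + j) n) => h; [rewrite min_l | rewrite min_r]; nia.
Qed.

Lemma Mn_swap12 (n i j k : nat) : Mn n i j k = Mn n j i k.
Proof. by rewrite /Mn minnC (mulnC j i) (addnC j i). Qed.

Lemma Mn_swap23 (n i j k : nat) : (i <= n)%N -> (j <= n)%N -> (k <= n)%N ->
  Mn n i j k = Mn n i k j.
Proof. by move=> hi hj hk; rewrite !Mn_minE //; lia. Qed.

Lemma Mn_rot (n i j k : nat) : (i <= n)%N -> (j <= n)%N -> (k <= n)%N ->
  Mn n k i j = Mn n i j k.
Proof. by move=> hi hj hk; rewrite Mn_swap23 // Mn_swap12 Mn_swap23 // Mn_swap12. Qed.

Lemma Mn_at0 (n i j : nat) : (i <= n)%N -> (j <= n)%N -> Mn n i j 0 = 0.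
Proof. by move=> hi hj; rewrite /Mn mul0n subn0 min_l //; case: (leqP (i + j) n); nia. Qed.

Lemma Mn_atn (n i j : nat) : (i <= n)%N -> (j <= n)%N -> Mn n i j n = (i * j)%N%:Z.
Proof. by move=> hi hj; rewrite /Mn subnn mul0n subr0 min_r //; case: (leqP i j); nia. Qed.

Lemma Mn_step (n i j k : nat) : (i <= n)%N -> (j <= n)%N -> (1 <= k <= n)%N ->
  in_step_range n i j (Mn n i j k - Mn n i j k.-1).
Proof.
move=> hi hj /andP[hk1 hkn]; rewrite /in_step_range /Mn.
case: k hk1 hkn => // k _ hk /=.
have -> : (n - k = (n - k.+1).+1)%N by lia.
rewrite !mulSn.
have : ((n - k.+1) * (i + j - n) <= i * j)%N.
  apply: leq_trans (leq_mul (leq_subr k.+1 n) (leqnn _)) _.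
  by case: (leqP (i + j) n) => h; nia.
move: (k * minn i j)%N ((n - k.+1) * (i + j - n))%N => a b.
split; lia.
Qed.

Lemma Mn_corner_sum (n : nat) : corner_sum n (Mn n).
Proof.
split=> [i j hi hj | i j k hi hj /[dup] hk /andP[_ hkn]].
  rewrite (Mn_swap23 hi (leq0n n) hj) (Mn_rot hi hj (leq0n n)).
  rewrite (Mn_swap23 hi (leqnn n) hj) (Mn_rot hi hj (leqnn n)).
  by rewrite !Mn_at0 // !Mn_atn.
have hk1 : (k.-1 <= n)%N by lia.
split; first exact: Mn_step.
  by rewrite (Mn_swap23 hi hkn hj) (Mn_swap23 hi hk1 hj); apply: Mn_step.
by rewrite (Mn_rot hi hj hkn) (Mn_rot hi hj hk1); apply: Mn_step.
Qed.

Theorem mainTheorem9 (n : nat) :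
  corner_sum n (Mn n) /\
  (forall C : hypermatrix, corner_sum n C ->
     forall i j k : nat, (i <= n)%N -> (j <= n)%N -> (k <= n)%N ->
       C i j k <= Mn n i j k) /\
  (forall C : hypermatrix, corner_sum n C ->
     (forall D : hypermatrix, corner_sum n D -> cs_le n C D) ->
     forall i j k : nat, (i <= n)%N -> (j <= n)%N -> (k <= n)%N ->
       C i j k = Mn n i j k).
Proof.
split; first exact: Mn_corner_sum.
split; first exact: corner_sum_le_Mn.
move=> C hC hmin i j k hi hj hk; apply/eqP; rewrite eq_le corner_sum_le_Mn //=.
exact: hmin (Mn n) (Mn_corner_sum n) i j k hi hj hk.
Qed.
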